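(* Let $p$ be an odd prime. The functor $U$ from $\mathbb{Z}_{(p)}$-modules to discrete $A$-modules, $UL=\mathrm{Hom}^{\mathrm{cts}}_{\mathbb{Z}_{(p)}}(A,L)$, is exact and preserves direct sums and direct limits.
   Context: $A$ is the ring of degree zero stable operations in $p$-local complex $K$-theory. Fix $q$ primitive mod $p^2$, $\Psi^q\in A$ the Adams operation, $q_i=q^{(-1)^i\lfloor i/2\rfloor}$, $\Theta_n(X)=\prod_{i=1}^n(X-q_i)$, $\Phi_n=\Theta_n(\Psi^q)$; every element of $A$ is uniquely a convergent sum $\sum_{n\ge0}a_n\Phi_n$ with $a_n\in\mathbb{Z}_{(p)}$, and $A_m=\{\sum_{n\ge m}a_n\Phi_n\}$. An $A$-module $M$ is discrete if each $x\in M$ satisfies $A_nx=0$ for some $n$. $\mathrm{Hom}^{\mathrm{cts}}_{\mathbb{Z}_{(p)}}(A,L)$ is the set of $\mathbb{Z}_{(p)}$-homomorphisms $A\to L$ whose kernel contains some $A_n$, an $A$-module via $(af)(t)=f(ta)$. *)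

From HB Require Import structures.
From mathcomp Require Import all_boot all_order all_algebra ring.
Set Implicit Arguments. Unset Strict Implicit. Unset Printing Implicit Defensive.
Import Order.TTheory GRing.Theory Num.Theory.
Local Open Scope ring_scope.

(* The p-local integers Z_(p) = { x in Q | p does not divide denq x }  *)
(* (for p prime, "coprime p den" is the same as "p does not divide").  *)

Definition zloc_pred (p : nat) : {pred rat} := fun x => coprime p `|denq x|.

Lemma denq_dvd_int (x : rat) (d : int) :
  (x * d%:~R) \is a Num.int -> (denq x %| d)%Z.
Proof.
move=> /intrP [k Hk].
have E : (numq x * d)%:~R = (k * denq x)%:~R :> rat.
  by rewrite !intrM numqE -Hk mulrAC.
have E' : numq x * d = k * denq x by apply: (@intr_inj rat).
have : (denq x %| numq x * d)%Z by rewrite E' dvdz_mull.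
rewrite Gauss_dvdzr // coprimez_sym; exact: coprime_num_den.
Qed.

Lemma zloc_den_mul p (x : rat) (d : int) :
  (x * d%:~R) \is a Num.int -> coprime p `|d| -> coprime p `|denq x|.
Proof.
move=> Hx Hd; have := denq_dvd_int Hx => Hdv.
exact: (coprimez_dvdr (p := p%:Z) Hdv).
Qed.

Fact zloc_closed p : GRing.subring_closed (zloc_pred p).
Proof.
split.
- by rewrite /zloc_pred unfold_in /= coprimen1.
- move=> x y; rewrite /zloc_pred !unfold_in /= => Hx Hy.
  apply: (@zloc_den_mul p _ (denq x * denq y)).
    have -> : (x - y) * (denq x * denq y)%:~R
        = (numq x * denq y - numq y * denq x)%:~R :> rat.
      rewrite intrB !intrM !numqE; ring.
    exact: intr_int.
  by rewrite abszM coprimeMr Hx Hy.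
- move=> x y; rewrite /zloc_pred !unfold_in /= => Hx Hy.
  apply: (@zloc_den_mul p _ (denq x * denq y)).
    have -> : (x * y) * (denq x * denq y)%:~R = (numq x * numq y)%:~R :> rat.
      rewrite !intrM !numqE; ring.
    exact: intr_int.
  by rewrite abszM coprimeMr Hx Hy.
Qed.

HB.instance Definition _ p := GRing.isSubringClosed.Build rat (zloc_pred p)
  (zloc_closed p).

Record Zloc (p : nat) := ZlocMk { zval : rat; _ : zval \in zloc_pred p }.
HB.instance Definition _ p := [isSub for @zval p].
HB.instance Definition _ p := [Choice of Zloc p by <:].
HB.instance Definition _ p := [SubChoice_isSubComNzRing of Zloc p by <:].

(* The ring A of degree zero stable operations, as a Z_(p)-module.     *)
(* Every element of A is uniquely a convergent sum  sum_n a_n Phi_n    *)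
(* with a_n in Z_(p); we represent the element by its coefficient      *)
(* and A_m = { sum_{n >= m} a_n Phi_n } = sequences vanishing below m. *)

Definition Acoef (p : nat) := nat -> Zloc p.

Definition Aadd p (a b : Acoef p) : Acoef p := fun n => a n + b n.
Definition Ascale p (c : Zloc p) (a : Acoef p) : Acoef p := fun n => c * a n.

Definition in_Afilt p (m : nat) (a : Acoef p) : Prop :=
  forall n, (n < m)%N -> a n = 0.

(* h : A -> L is an element of Hom^cts_{Z_(p)}(A, L) = U L :           *)
(* a Z_(p)-linear map whose kernel contains some A_m.                  *)
Definition is_cts_hom p (L : lmodType (Zloc p)) (h : Acoef p -> L) : Prop :=
  [/\ forall a b, h (Aadd a b) = h a + h b,
      forall c a, h (Ascale c a) = c *: h a
    & exists m, forall a, in_Afilt m a -> h a = 0].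

(* On morphisms, U g sends h to g \o h. *)

Definition is_direct_sum p (I : Type) (M : I -> lmodType (Zloc p))
    (S : lmodType (Zloc p)) (iota : forall i, {linear M i -> S}) : Prop :=
  (forall s : S, exists n (e : 'I_n -> I) (x : forall k, M (e k)),
       s = \sum_(k < n) iota (e k) (x k)) /\
  (forall n (e : 'I_n -> I) (x : forall k, M (e k)), injective e ->
       \sum_(k < n) iota (e k) (x k) = 0 -> forall k, x k = 0).

Definition U_is_direct_sum p (I : Type) (M : I -> lmodType (Zloc p))
    (S : lmodType (Zloc p)) (iota : forall i, {linear M i -> S}) : Prop :=
  (forall h : Acoef p -> S, is_cts_hom h ->
     exists n (e : 'I_n -> I) (hs : forall k, Acoef p -> M (e k)),
       (forall k, is_cts_hom (hs k)) /\
       forall a, h a = \sum_(k < n) iota (e k) (hs k a)) /\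
  (forall n (e : 'I_n -> I) (hs : forall k, Acoef p -> M (e k)), injective e ->
       (forall k, is_cts_hom (hs k)) ->
       (forall a, \sum_(k < n) iota (e k) (hs k a) = 0) ->
       forall k a, hs k a = 0).

Definition directed (I : Type) (le : I -> I -> Prop) : Prop :=
  [/\ forall i, le i i,
      forall i j k, le i j -> le j k -> le i k,
      inhabited I
    & forall i j, exists k, le i k /\ le j k].

Definition direct_system p (I : Type) (le : I -> I -> Prop)
    (L : I -> lmodType (Zloc p)) (phi : forall i j, {linear L i -> L j}) : Prop :=
  [/\ directed le,
      forall i (x : L i), phi i i x = x
    & forall i j k (x : L i), le i j -> le j k -> phi j k (phi i j x) = phi i k x].

Definition is_direct_limit p (I : Type) (le : I -> I -> Prop)
    (L : I -> lmodType (Zloc p)) (phi : forall i j, {linear L i -> L j})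
    (C : lmodType (Zloc p)) (psi : forall i, {linear L i -> C}) : Prop :=
  [/\ forall i j (x : L i), le i j -> psi j (phi i j x) = psi i x,
      forall c : C, exists i (x : L i), psi i x = c
    & forall i (x : L i), psi i x = 0 -> exists j, le i j /\ phi i j x = 0].

Definition U_is_direct_limit p (I : Type) (le : I -> I -> Prop)
    (L : I -> lmodType (Zloc p)) (phi : forall i j, {linear L i -> L j})
    (C : lmodType (Zloc p)) (psi : forall i, {linear L i -> C}) : Prop :=
  [/\ forall i j (h : Acoef p -> L i), le i j -> forall a, psi j (phi i j (h a)) = psi i (h a),
      forall h : Acoef p -> C, is_cts_hom h ->
        exists i (h' : Acoef p -> L i), is_cts_hom h' /\ forall a, psi i (h' a) = h a
    & forall i (h' : Acoef p -> L i), is_cts_hom h' ->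
        (forall a, psi i (h' a) = 0) ->
        exists j, le i j /\ forall a, phi i j (h' a) = 0].

(* A continuous homomorphism h : A -> L kills some A_m, so it is determined
   by the finitely many values h(Phi_n), n < m:  h a = sum_(n<m) a_n h(Phi_n).
   Conversely a |-> a_n x is continuous for every x.  Hence a property of
   continuous homomorphisms that holds for 0, is stable under sums and holds
   for each a |-> a_n h(Phi_n) holds for h.  Exactness, direct sums and direct
   limits are all finitary conditions on elements, so each reduces to the
   corresponding property of L applied to the finitely many h(Phi_n); for
   direct limits, directedness supplies a common index for finitely many
   elements.  Neither the primality of p nor the choice of q plays a role
   once A is described through the basis Phi_n. *)

From HB Require Import structures.
From mathcomp Require Import all_boot all_order all_algebra.
From Stdlib Require Import FunctionalExtensionality.
Set Implicit Arguments. Unset Strict Implicit. Unset Printing Implicit Defensive.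
Import Order.TTheory GRing.Theory Num.Theory.
Local Open Scope ring_scope.

Section ContinuousHoms.
Variable p : nat.

Definition Phi (n : nat) : Acoef p := fun k => if k == n then 1 else 0.

Lemma cts_hom_zero (L : lmodType (Zloc p)) :
  is_cts_hom (fun _ : Acoef p => 0 : L).
Proof.
split=> [a b|c a|]; first by rewrite addr0.
  by rewrite scaler0.
by exists 0%N.
Qed.

Lemma cts_homD (L : lmodType (Zloc p)) (h1 h2 : Acoef p -> L) :
  is_cts_hom h1 -> is_cts_hom h2 -> is_cts_hom (fun a => h1 a + h2 a).
Proof.
move=> [D1 Z1 [m1 K1]] [D2 Z2 [m2 K2]]; split=> [a b|c a|].
- by rewrite D1 D2 addrACA.
- by rewrite Z1 Z2 scalerDr.
exists (maxn m1 m2) => a a0; rewrite K1 ?K2 ?addr0 // => n n_lt; apply: a0.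
  by rewrite leq_max n_lt orbT.
by rewrite leq_max n_lt.
Qed.

Lemma cts_hom_coord (L : lmodType (Zloc p)) (n : nat) (x : L) :
  is_cts_hom (fun a : Acoef p => a n *: x).
Proof.
split=> [a b|c a|]; first exact: scalerDl.
  exact/esym/scalerA.
by exists n.+1 => a a0; rewrite a0 // scale0r.
Qed.

Lemma cts_hom_comp (L L' : lmodType (Zloc p)) (g : {linear L -> L'})
    (h : Acoef p -> L) :
  is_cts_hom h -> is_cts_hom (fun a => g (h a)).
Proof.
move=> [D Z [m K]]; split=> [a b|c a|]; first by rewrite D linearD.
  by rewrite Z linearZ.
by exists m => a a0; rewrite K // linear0.
Qed.

Section OneHom.
Variables (L : lmodType (Zloc p)) (h : Acoef p -> L).
Hypothesis h_cts : is_cts_hom h.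

Lemma cts_hom_at0 : h (fun _ => 0) = 0.
Proof.
have [_ Z _] := h_cts.
have -> : (fun _ : nat => 0 : Zloc p) = Ascale 0 (fun _ => 0).
  by apply: functional_extensionality => k; rewrite /Ascale mul0r.
by rewrite Z scale0r.
Qed.

Lemma cts_hom_expand : exists m, forall a, h a = \sum_(n < m) a n *: h (Phi n).
Proof.
have [D Z [m K]] := h_cts; exists m => a.
pose trunc k : Acoef p := fun i => if (i < k)%N then a i else 0.
have split_a : a = Aadd (trunc m) (fun i => if (i < m)%N then 0 else a i).
  apply: functional_extensionality => i; rewrite /Aadd /trunc.
  by case: ifP; rewrite ?addr0 ?add0r.
rewrite {1}split_a D (K (fun i => if (i < m)%N then 0 else a i)) ?addr0;
  last by move=> i ->.
elim: m {K split_a} => [|m IH].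
  by rewrite big_ord0 -cts_hom_at0.
have -> : trunc m.+1 = Aadd (trunc m) (Ascale (a m) (Phi m)).
  apply: functional_extensionality => i; rewrite /Aadd /Ascale /trunc /Phi.
  case: (ltngtP i m) => [i_lt|i_gt|->].
  - by rewrite ltnS (ltnW i_lt) mulr0 addr0.
  - by rewrite ltnNge i_gt mulr0 addr0.
  - by rewrite ltnSn mulr1 add0r.
by rewrite D Z IH big_ord_recr.
Qed.

End OneHom.

Lemma cts_hom_ind (L : lmodType (Zloc p)) (P : (Acoef p -> L) -> Prop) :
  P (fun _ => 0) ->
  (forall h1 h2, P h1 -> P h2 -> P (fun a => h1 a + h2 a)) ->
  forall h, is_cts_hom h -> (forall n, P (fun a => a n *: h (Phi n))) -> P h.
Proof.
move=> P0 PD h /cts_hom_expand [m Em] Pcoord.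
have -> : h = fun a => \sum_(n < m) a n *: h (Phi n).
  exact: functional_extensionality.
elim: m {Em} => [|m IH].
  by have -> // : (fun a : Acoef p => \sum_(n < 0) a n *: h (Phi n)) = fun _ => 0;
    apply: functional_extensionality => a; rewrite big_ord0.
have -> : (fun a : Acoef p => \sum_(n < m.+1) a n *: h (Phi n)) =
    fun a => \sum_(n < m) a n *: h (Phi n) + a m *: h (Phi m).
  by apply: functional_extensionality => a; rewrite big_ord_recr.
exact: PD.
Qed.

End ContinuousHoms.

Arguments Phi {p} n.

Section Exactness.
Variables (p : nat) (L1 L2 L3 : lmodType (Zloc p)).
Variables (f : {linear L1 -> L2}) (g : {linear L2 -> L3}).
Hypothesis fg_exact : forall y : L2, g y = 0 <-> exists x : L1, f x = y.

Lemma U_exact (h : Acoef p -> L2) : is_cts_hom h ->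
  (forall a, g (h a) = 0) <->
  exists h1 : Acoef p -> L1, is_cts_hom h1 /\ forall a, f (h1 a) = h a.
Proof.
move=> h_cts; split=> [gh0|[h1 [_ fh1]] a]; last first.
  by apply/fg_exact; exists (h1 a).
pattern h; apply: (cts_hom_ind _ _ h_cts) => [|h1 h2 [k1 [k1_cts fk1]] [k2 [k2_cts fk2]]|n].
- by exists (fun _ => 0); split=> [|a]; rewrite ?linear0 //; apply: cts_hom_zero.
- exists (fun a => k1 a + k2 a); split=> [|a]; first exact: cts_homD.
  by rewrite linearD fk1 fk2.
- have [x fx] := (fg_exact _).1 (gh0 (Phi n)).
  exists (fun a => a n *: x); split=> [|a]; first exact: cts_hom_coord.
  by rewrite linearZ fx.
Qed.

End Exactness.

Section DirectSum.
Variables (p : nat) (I : Type) (M : I -> lmodType (Zloc p)).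
Variables (S : lmodType (Zloc p)) (iota : forall i, {linear M i -> S}).

Definition finite_iota_sum (h : Acoef p -> S) : Prop :=
  exists n (e : 'I_n -> I) (hs : forall k, Acoef p -> M (e k)),
    (forall k, is_cts_hom (hs k)) /\
    forall a, h a = \sum_(k < n) iota (e k) (hs k a).

Lemma finite_iota_sum0 : finite_iota_sum (fun _ => 0).
Proof.
have no_ord0 (k : 'I_0) : False by case: k.
exists 0%N, (fun k => False_rect I (no_ord0 k)),
  (fun k => False_rect _ (no_ord0 k)).
by split=> [k|a]; [case: (no_ord0 k) | rewrite big_ord0].
Qed.

Lemma finite_iota_sumD (h1 h2 : Acoef p -> S) :
  finite_iota_sum h1 -> finite_iota_sum h2 ->
  finite_iota_sum (fun a => h1 a + h2 a).
Proof.
move=> [n1 [e1 [hs1 [cts1 E1]]]] [n2 [e2 [hs2 [cts2 E2]]]].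
pose e (k : 'I_(n1 + n2)) : I :=
  match split k with inl j => e1 j | inr j => e2 j end.
pose hs (k : 'I_(n1 + n2)) : Acoef p -> M (e k) :=
  match split k as s
    return Acoef p -> M (match s with inl j => e1 j | inr j => e2 j end)
  with inl j => hs1 j | inr j => hs2 j end.
have iota_hs a k : iota (e k) (hs k a) =
    match split k with
    | inl j => iota (e1 j) (hs1 j a) | inr j => iota (e2 j) (hs2 j a) end.
  by rewrite /hs /e; case: (split k).
exists (n1 + n2)%N, e, hs; split=> [k|a].
  by rewrite /hs /e; case: (split k) => j; [exact: cts1 | exact: cts2].
rewrite E1 E2 big_split_ord; congr (_ + _); apply: eq_bigr => j _.
  by rewrite iota_hs (unsplitK (inl _ j)).
by rewrite iota_hs (unsplitK (inr _ j)).
Qed.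

Lemma U_direct_sum : is_direct_sum iota -> U_is_direct_sum iota.
Proof.
move=> [iota_gen iota_indep]; split=> [h h_cts|n e hs e_inj _ hs0 k a].
  pattern h; apply: (cts_hom_ind _ _ h_cts) => [||n]; first exact: finite_iota_sum0.
    exact: finite_iota_sumD.
  have [N [e [x ->]]] := iota_gen (h (Phi n)).
  exists N, e, (fun k a => a n *: x k); split=> [k|a]; first exact: cts_hom_coord.
  by rewrite scaler_sumr; apply: eq_bigr => k _; rewrite linearZ.
exact: (iota_indep n e (fun k => hs k a) e_inj (hs0 a)).
Qed.

End DirectSum.

Section DirectLimit.
Variables (p : nat) (I : Type) (le : I -> I -> Prop).
Variables (L : I -> lmodType (Zloc p)) (phi : forall i j, {linear L i -> L j}).
Variables (C : lmodType (Zloc p)) (psi : forall i, {linear L i -> C}).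
Hypotheses (phi_system : direct_system le phi) (psi_limit : is_direct_limit le phi psi).

Lemma U_limit_surj (h : Acoef p -> C) : is_cts_hom h ->
  exists i (h' : Acoef p -> L i), is_cts_hom h' /\ forall a, psi i (h' a) = h a.
Proof.
have [[_ _ [i0] le_ub] _ _] := phi_system.
have [psi_phi psi_surj _] := psi_limit.
move=> h_cts; pattern h; apply: (cts_hom_ind _ _ h_cts) => [|h1 h2|n].
- exists i0, (fun _ => 0); split=> [|a]; last exact: linear0.
  exact: cts_hom_zero.
- move=> [i1 [k1 [k1_cts psi_k1]]] [i2 [k2 [k2_cts psi_k2]]].
  have [j [le1 le2]] := le_ub i1 i2.
  exists j, (fun a => phi i1 j (k1 a) + phi i2 j (k2 a)); split=> [|a].
    by apply: cts_homD; apply: cts_hom_comp.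
  by rewrite linearD !psi_phi // psi_k1 psi_k2.
- have [i [x psi_x]] := psi_surj (h (Phi n)).
  exists i, (fun a => a n *: x); split=> [|a]; first exact: cts_hom_coord.
  by rewrite linearZ psi_x.
Qed.

Lemma U_limit_ker i (h' : Acoef p -> L i) : is_cts_hom h' ->
  (forall a, psi i (h' a) = 0) ->
  exists j, le i j /\ forall a, phi i j (h' a) = 0.
Proof.
have [[le_refl le_trans _ le_ub] phi_id phi_comp] := phi_system.
have [_ _ psi_ker] := psi_limit.
move=> h'_cts psi_h'; pattern h'; apply: (cts_hom_ind _ _ h'_cts) => [|h1 h2|n].
- by exists i; split=> // a; rewrite linear0.
- move=> [j1 [le1 phi_h1]] [j2 [le2 phi_h2]].
  have [j [le1j le2j]] := le_ub j1 j2.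
  exists j; split=> [|a]; first exact: le_trans le1j.
  by rewrite linearD -(phi_comp _ _ _ _ le1 le1j) -(phi_comp _ _ _ _ le2 le2j)
    phi_h1 phi_h2 !linear0 addr0.
- have [j [le_ij phi_x]] := psi_ker _ _ (psi_h' (Phi n)).
  by exists j; split=> // a; rewrite linearZ_LR phi_x scaler0.
Qed.

Lemma U_direct_limit : U_is_direct_limit le phi psi.
Proof.
have [psi_phi _ _] := psi_limit.
split=> [i j h le_ij a||]; [exact: psi_phi | exact: U_limit_surj | exact: U_limit_ker].
Qed.

End DirectLimit.

Theorem theorem5p5 (p : nat) (p_prime : prime p) (p_odd : odd p) :
  (forall (L1 L2 L3 : lmodType (Zloc p))
          (f : {linear L1 -> L2}) (g : {linear L2 -> L3}),
      (forall y : L2, g y = 0 <-> exists x : L1, f x = y) ->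
      forall h : Acoef p -> L2, is_cts_hom h ->
        ((forall a, g (h a) = 0) <->
         exists h1 : Acoef p -> L1, is_cts_hom h1 /\ forall a, f (h1 a) = h a))
  /\
  (forall (I : Type) (M : I -> lmodType (Zloc p)) (S : lmodType (Zloc p))
          (iota : forall i, {linear M i -> S}),
      is_direct_sum iota -> U_is_direct_sum iota)
  /\
  (forall (I : Type) (le : I -> I -> Prop) (L : I -> lmodType (Zloc p))
          (phi : forall i j, {linear L i -> L j})
          (C : lmodType (Zloc p)) (psi : forall i, {linear L i -> C}),
      direct_system le phi -> is_direct_limit le phi psi ->
      U_is_direct_limit le phi psi).
Proof.
split; first exact: U_exact.
split; first exact: U_direct_sum.
by move=> *; apply: U_direct_limit.
Qed.
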